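(* Let $x\in\mathrm{dom}(\mathcal R)$ satisfy $\mathcal R(x)=\inf\{\mathcal R(z):z\in\mathbb X,Az=Ax\}$, let $x_\alpha\in R_\alpha(Ax)$, $\alpha>0$, be any selection, and let $\phi\in\Phi$. The following are equivalent: (i) $\mathcal F(\sigma_x)\le\phi$ pointwise on $[0,\infty)$; (ii) $\sigma_x(\alpha)\le\sup_{t\ge0}\big(\phi(t)-\frac t{2\alpha}\big)$ for all $\alpha>0$; (iii) $\mathcal R(x)-\mathcal R(z)\le\phi(\|Ax-Az\|^2_{\mathbb Y})$ for all $z\in\mathbb X$. In particular, $\mathcal R(x)-\mathcal R(z)\le(\mathcal F(\sigma_x))(\|Ax-Az\|_{\mathbb Y}^2)$ for all $z\in\mathbb X$.
   Context: Standing setting: $\mathbb X$ real Banach space, $\tau$ a topology with $(\mathbb X,\tau)$ locally convex Hausdorff; $\mathcal R:\mathbb X\to(-\infty,\infty]$ proper convex with $\tau$-compact sublevel sets; $\mathbb Y$ real Hilbert space; $A:\mathbb X\to\mathbb Y$ linear, $\tau$-to-weak continuous. $T_\alpha(x,g):=\frac1{2\alpha}\|g-Ax\|_{\mathbb Y}^2+\mathcal R(x)$, $R_\alpha(g):=\operatorname{argmin}_{x\in\mathrm{dom}(\mathcal R)}T_\alpha(x,g)$. Defect: $\sigma_x(\alpha):=T_\alpha(x,Ax)-T_\alpha(x_\alpha,Ax)$ for $\alpha>0$. $\Phi$ is the set of concave upper semicontinuous functions $\phi:[0,\infty)\to[0,\infty)$. For a function $\sigma:(0,\infty)\to[0,\infty]$,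 $\mathcal F(\sigma):[0,\infty)\to[-\infty,\infty)$ is defined by $(\mathcal F(\sigma))(t):=\inf_{\alpha>0}\big(\sigma(\alpha)+\frac t{2\alpha}\big)$. *)

From HB Require Import structures.
From mathcomp Require Import all_boot all_order all_algebra.
From mathcomp Require Import all_classical all_reals all_analysis.
Set Implicit Arguments. Unset Strict Implicit. Unset Printing Implicit Defensive.
Import Order.TTheory GRing.Theory Num.Theory.
Import numFieldNormedType.Exports.
Local Open Scope classical_set_scope.
Local Open Scope ring_scope.

(* Y is a real Hilbert space: a complete normed space whose norm comes from
   the (symmetric, bilinear) inner product [inner]. *)
Definition is_inner_product (R : realType) (Y : normedModType R)
    (inner : Y -> Y -> R) : Prop :=
  [/\ (forall y z, inner y z = inner z y),
      (forall y1 y2 z, inner (y1 + y2) z = inner y1 z + inner y2 z),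
      (forall (a : R) y z, inner (a *: y) z = a * inner y z) &
      (forall y, `|y| ^+ 2 = inner y y)].

Definition proper_convex (R : realType) (X : lmodType R)
    (Reg : X -> \bar R) : Prop :=
  [/\ (forall x, Reg x != -oo%E),
      (exists x, (Reg x < +oo)%E) &
      (forall x y (l : R), 0 <= l -> l <= 1 ->
         (Reg (l *: x + (1 - l) *: y)%R <= l%:E * Reg x + (1 - l)%:E * Reg y)%E)].

Definition dom (R : realType) (X : Type) (Reg : X -> \bar R) : set X :=
  [set x | (Reg x < +oo)%E].

Definition Tfun (R : realType) (X Y : normedModType R) (A : X -> Y)
    (Reg : X -> \bar R) (alpha : R) (x : X) (g : Y) : \bar R :=
  ((`|g - A x| ^+ 2 / (2 * alpha))%:E + Reg x)%E.

Definition Ralpha (R : realType) (X Y : normedModType R) (A : X -> Y)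
    (Reg : X -> \bar R) (alpha : R) (g : Y) : set X :=
  [set x | dom Reg x /\
     forall z, dom Reg z -> (Tfun A Reg alpha x g <= Tfun A Reg alpha z g)%E].

Definition defect (R : realType) (X Y : normedModType R) (A : X -> Y)
    (Reg : X -> \bar R) (x : X) (xa : R -> X) (alpha : R) : \bar R :=
  (Tfun A Reg alpha x (A x) - Tfun A Reg alpha (xa alpha) (A x))%E.

Definition Ftrans (R : realType) (sigma : R -> \bar R) (t : R) : \bar R :=
  ereal_inf [set (sigma alpha + (t / (2 * alpha))%:E)%E
            | alpha in [set a : R | 0 < a]].

(* Phi: concave upper semicontinuous functions [0,oo) -> [0,oo);
   only the values on [0,oo) matter. *)
Definition in_Phi (R : realType) (phi : R -> R) : Prop :=
  [/\ (forall t, 0 <= t -> 0 <= phi t),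
      (forall s t (l : R), 0 <= s -> 0 <= t -> 0 <= l -> l <= 1 ->
          l * phi s + (1 - l) * phi t <= phi (l * s + (1 - l) * t)) &
      (forall t, 0 <= t -> forall e : R, 0 < e -> exists2 d : R, 0 < d &
          forall s, 0 <= s -> `|s - t| < d -> phi s < phi t + e)].

From HB Require Import structures.
From mathcomp Require Import all_boot all_order all_algebra.
From mathcomp Require Import all_classical all_reals all_analysis.
Set Implicit Arguments. Unset Strict Implicit. Unset Printing Implicit Defensive.
Import Order.TTheory GRing.Theory Num.Theory.
Import numFieldNormedType.Exports.
Local Open Scope classical_set_scope.
Local Open Scope ring_scope.
From mathcomp Require Import ring lra.

(* Write d(z) := |Ax - Az|^2 and phi*(alpha) := sup_{t >= 0} (phi t - t/(2 alpha)).
   The proof has two independent ingredients.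

   1. Variational part (no convexity of phi needed).  Since x_alpha minimises
      T_alpha(., Ax), for every z and alpha > 0
          R(x) - R(z) <= sigma_x(alpha) + d(z)/(2 alpha),
      so R(x) - R(z) <= F(sigma_x)(d(z)), the "in particular" claim; this
      gives (i) => (iii).  Testing (iii) at z = x_alpha, where
      sigma_x(alpha) = R(x) - R(x_alpha) - d(x_alpha)/(2 alpha), gives
      (iii) => (ii).
   2. Convex-analytic part (only phi in Phi used).  A concave upper
      semicontinuous phi >= 0 has approximate supergradients of positive
      slope: phi s + b (t - s) <= phi t + e.  Choosing alpha = 1/(2b) in the
      infimum defining F(sigma) then yields (ii) => (i) for ANY sigma.
   The topological hypotheses and the minimality of R(x) on the fibre of Ax
   serve only to make the selection x_alpha meaningful; the argument uses
   just that each x_alpha minimises T_alpha(., Ax) and that R > -oo. *)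

Definition concave_dual (R : realType) (phi : R -> R) (alpha : R) : \bar R :=
  ereal_sup [set EFin (phi t - t / (2 * alpha))%R | t in [set t : R | (0 <= t)%R]].

Lemma Phi_chord (R : realType) (phi : R -> R) (phiP : in_Phi phi)
    (a b c : R) :
  0 <= a -> a <= b -> b <= c ->
  (c - b) * phi a + (b - a) * phi c <= (c - a) * phi b.
Proof.
case: phiP => _ concave _ a0 ab bc.
have [ac|ac] := eqVneq a c.
  have ba : b = a by apply/eqP; rewrite eq_le ab ac bc.
  by rewrite ba ac !subrr !mul0r addr0.
have ca0 : 0 < c - a by rewrite subr_gt0 lt_neqAle ac (le_trans ab bc).
pose l := (c - b) / (c - a).
have l0 : 0 <= l by apply: divr_ge0; lra.
have l1 : l <= 1 by rewrite ler_pdivrMr // mul1r; lra.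
have := concave a c l a0 (le_trans a0 (le_trans ab bc)) l0 l1.
have -> : l * a + (1 - l) * c = b by rewrite /l; field; lra.
have -> : 1 - l = (b - a) / (c - a) by rewrite /l; field; lra.
have -> : (c - b) * phi a + (b - a) * phi c =
    (c - a) * ((c - b) / (c - a) * phi a + (b - a) / (c - a) * phi c).
  by field; lra.
by rewrite ler_pM2l.
Qed.

Lemma Phi_secant_left (R : realType) (phi : R -> R) (phiP : in_Phi phi)
    (t u m s : R) :
  0 <= t -> t < u ->
  m * (u - t) = phi u - phi t ->
  0 <= s -> s <= t -> phi s + m * (t - s) <= phi t.
Proof.
move=> t0 tu slope s0 st; have chord := Phi_chord phiP s0 st (ltW tu).
have ut0 : 0 < u - t by lra.
have scaled_slope : (u - t) * (m * (t - s)) = (phi u - phi t) * (t - s).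
  by rewrite mulrA [(u - t) * m]mulrC slope.
rewrite -(ler_pM2l ut0); nra.
Qed.

Lemma Phi_secant_right (R : realType) (phi : R -> R) (phiP : in_Phi phi)
    (t u m s : R) :
  0 <= t -> t < u ->
  m * (u - t) = phi u - phi t ->
  u <= s -> phi s <= phi t + m * (s - t).
Proof.
move=> t0 tu slope us; have chord := Phi_chord phiP t0 (ltW tu) us.
have ut0 : 0 < u - t by lra.
have scaled_slope : (u - t) * (m * (s - t)) = (phi u - phi t) * (s - t).
  by rewrite mulrA [(u - t) * m]mulrC slope.
rewrite -(ler_pM2l ut0); nra.
Qed.

(* Secant slopes are nonnegative: otherwise phi would become negative. *)
Lemma Phi_secant_ge0 (R : realType) (phi : R -> R) (phiP : in_Phi phi)
    (t u m : R) :
  0 <= t -> t < u ->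
  m * (u - t) = phi u - phi t -> 0 <= m.
Proof.
move=> t0 tu slope; have [phi_ge0 _ _] := phiP.
rewrite leNgt; apply/negP => m_lt0.
pose K := (u - t) + (phi t + 1) / (- m).
have Km : K * m = (u - t) * m - (phi t + 1) by rewrite /K; field; lra.
have uK : u - t <= K.
  by rewrite /K lerDl; apply: divr_ge0; [have := phi_ge0 t t0; lra | lra].
have := Phi_secant_right phiP (s := t + K) t0 tu slope ltac:(lra).
have := phi_ge0 (t + K) ltac:(lra).
nra.
Qed.

(* Approximate supergradients: for t >= 0 and e > 0 there is a slope b > 0
   with phi s + b (t - s) <= phi t + e for all s >= 0.  Upper semicontinuity
   handles s near t; the secant through t and a nearby point handles the rest. *)
Lemma Phi_approx_supergradient (R : realType) (phi : R -> R) (phiP : in_Phi phi)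
    (t e : R) :
  0 <= t -> 0 < e ->
  exists2 b : R, 0 < b & forall s, 0 <= s -> phi s + b * (t - s) <= phi t + e.
Proof.
move=> t0 e0; have [_ _ usc] := phiP.
have [d d0 near_t] := usc t t0 e e0.
pose u := t + d / 2; have tu : t < u by rewrite /u; lra.
pose m := (phi u - phi t) / (u - t).
have slope : m * (u - t) = phi u - phi t by rewrite /m divfK // subr_eq0 gt_eqF.
have m0 := Phi_secant_ge0 phiP t0 tu slope.
have et0 : 0 < e / (t + 1) by apply: divr_gt0; lra.
have et : e / (t + 1) * t <= e.
  by rewrite mulrC mulrA ler_pdivrMr; nra.
exists (m + e / (t + 1)); first lra.
move=> s s0; have [st|ts] := leP s t.
  by have := Phi_secant_left phiP t0 tu slope s0 st; nra.
have [su|us] := ltP s u.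
  by have := near_t s s0 ltac:(rewrite ger0_norm /u in su *; lra); nra.
by have := Phi_secant_right phiP t0 tu slope us; nra.
Qed.

(* (ii) => (i), for an arbitrary function sigma: take alpha = 1/(2b) in the
   infimum defining F(sigma)(t), b an approximate supergradient at t. *)
Lemma Ftrans_le_of_concave_dual (R : realType) (phi : R -> R) (phiP : in_Phi phi)
    (sigma : R -> \bar R) :
  (forall alpha, 0 < alpha -> (sigma alpha <= concave_dual phi alpha)%E) ->
  forall t, 0 <= t -> (Ftrans sigma t <= (phi t)%:E)%E.
Proof.
move=> dual_bound t t0; apply/lee_addgt0Pr => e e0.
have [b b0 supergrad] := Phi_approx_supergradient phiP t0 e0.
pose a := (2 * b)^-1; have a0 : 0 < a by rewrite invr_gt0; lra.
have scale s : s / (2 * a) = b * s by rewrite /a; field; rewrite gt_eqF.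
have sigma_le : (sigma a <= (phi t + e - b * t)%:E)%E.
  apply: le_trans (dual_bound a a0) _; apply: ge_ereal_sup => _ [s /= s0 <-].
  by rewrite scale lee_fin; have := supergrad s s0; lra.
apply: le_trans (ereal_inf_lbound _) _; first by exists a.
apply: le_trans (leeD2r _ sigma_le) _.
by rewrite -!EFinD lee_fin scale; lra.
Qed.

Section Defect.
Variables (R : realType) (X Y : normedModType R) (A : X -> Y).
Variables (Reg : X -> \bar R) (x : X) (xa : R -> X).
Hypothesis Reg_ninf : forall z, Reg z != -oo%E.
Hypothesis x_dom : dom Reg x.
Hypothesis xa_sel : forall alpha, 0 < alpha -> Ralpha A Reg alpha (A x) (xa alpha).

Local Notation sigma := (defect A Reg x xa).
Local Notation dist2 z := (`|A x - A z| ^+ 2).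

Lemma dom_finite (z : X) : dom Reg z -> Reg z = (fine (Reg z))%:E.
Proof. by move=> zdom; rewrite fineK // fin_numElt ltNye Reg_ninf. Qed.

Lemma defect_real (alpha : R) : 0 < alpha ->
  sigma alpha =
    (fine (Reg x) - fine (Reg (xa alpha)) - dist2 (xa alpha) / (2 * alpha))%:E.
Proof.
move=> a0; have [xa_dom _] := xa_sel a0.
rewrite /defect /Tfun (dom_finite x_dom) (dom_finite xa_dom).
by rewrite subrr normr0 expr0n mul0r add0r -!EFinD; congr EFin; ring.
Qed.

Lemma defect_minimality (alpha : R) (z : X) : 0 < alpha ->
  (Reg x - Reg z <= sigma alpha + (dist2 z / (2 * alpha))%:E)%E.
Proof.
move=> a0; have [xa_dom xa_min] := xa_sel a0.
rewrite (dom_finite x_dom) defect_real //.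
case Rz: (Reg z) => [rz| |]; last by have := Reg_ninf z; rewrite Rz.
- have := xa_min z; rewrite /dom /Tfun /= Rz ltry (dom_finite xa_dom) => /(_ isT).
  by rewrite -!EFinD !lee_fin; lra.
- by rewrite /= leNye.
Qed.

Lemma defect_le_Ftrans (z : X) : (Reg x - Reg z <= Ftrans sigma (dist2 z))%E.
Proof.
apply/ereal_infP => _ [alpha /= a0 <-].
exact: defect_minimality.
Qed.

(* (iii) => (ii), for an arbitrary function phi: test (iii) at z = x_alpha. *)
Lemma defect_le_concave_dual (phi : R -> R) :
  (forall z, (Reg x - Reg z <= (phi (dist2 z))%:E)%E) ->
  forall alpha, 0 < alpha -> (sigma alpha <= concave_dual phi alpha)%E.
Proof.
move=> phi_bound alpha a0; have [xa_dom _] := xa_sel a0.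
have := phi_bound (xa alpha).
rewrite (dom_finite x_dom) (dom_finite xa_dom) -EFinB lee_fin => bound.
apply: le_trans (ereal_sup_ubound _); last first.
  by exists (dist2 (xa alpha)) => //; exact: sqr_ge0.
rewrite defect_real // lee_fin; lra.
Qed.

End Defect.

Theorem lemma5p5
  (R : realType)
  (* X: real Banach space *)
  (X : completeNormedModType R)
  (* (X, tau) locally convex Hausdorff: Xt carries tau, iota : Xt -> X the
     (linear, bijective) identity map of the underlying vector space *)
  (Xt : tvsType R) (iota : {linear Xt -> X})
  (iota_bij : bijective iota) (Xt_hausdorff : hausdorff_space Xt)
  (* regularizer: proper convex, tau-compact sublevel sets *)
  (Reg : X -> \bar R) (Reg_pc : proper_convex Reg)
  (Reg_sub : forall c : R, compact (iota @^-1` [set x | (Reg x <= c%:E)%E]))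
  (* Y: real Hilbert space *)
  (Y : completeNormedModType R) (inner : Y -> Y -> R)
  (inner_ok : is_inner_product inner)
  (* A linear, tau-to-weak continuous *)
  (A : {linear X -> Y})
  (A_cont : forall y : Y, continuous (fun u : Xt => inner (A (iota u)) y))
  (* the point x *)
  (x : X) (x_dom : dom Reg x)
  (x_min : Reg x = ereal_inf [set Reg z | z in [set z | A z = A x]])
  (* a selection x_alpha in R_alpha(Ax) *)
  (xa : R -> X) (xa_sel : forall alpha : R, 0 < alpha -> Ralpha A Reg alpha (A x) (xa alpha))
  (phi : R -> R) (phi_Phi : in_Phi phi) :
  let sigma := defect A Reg x xa in
  ((forall t : R, 0 <= t -> (Ftrans sigma t <= (phi t)%:E)%E)
   <->
   (forall alpha : R, 0 < alpha ->
      (sigma alpha <= ereal_sup [set EFin (phi t - t / (2 * alpha))%R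
                                | t in [set t : R | (0 <= t)%R]])%E))
  /\
  ((forall alpha : R, 0 < alpha ->
      (sigma alpha <= ereal_sup [set EFin (phi t - t / (2 * alpha))%R
                                | t in [set t : R | (0 <= t)%R]])%E)
   <->
   (forall z : X, (Reg x - Reg z <= (phi (`|A x - A z| ^+ 2)%R)%:E)%E))
  /\
  (forall z : X, (Reg x - Reg z <= Ftrans sigma (`|A x - A z| ^+ 2)%R)%E).
Proof.
move=> sigma; have [Reg_ninf _ _] := Reg_pc.
have F_bound := defect_le_Ftrans Reg_ninf x_dom xa_sel.
have i_iii : (forall t, 0 <= t -> (Ftrans sigma t <= (phi t)%:E)%E) ->
    forall z, (Reg x - Reg z <= (phi (`|A x - A z| ^+ 2))%:E)%E.
  by move=> H z; apply: le_trans (F_bound z) (H _ (sqr_ge0 _)).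
have iii_ii := defect_le_concave_dual Reg_ninf x_dom xa_sel (phi := phi).
have ii_i := Ftrans_le_of_concave_dual phi_Phi (sigma := sigma).
split; [split | split; [split |]] => //.
- by move=> /i_iii /iii_ii.
- by move=> /ii_i /i_iii.
Qed.
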